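(* Let $G$ be a totally disconnected locally compact group, $K\leq G$ a compact open subgroup and $\mathcal{G}=K\backslash G/K$ the quotient hypergroup. If $X$ is any $G$-boundary such that $K\backslash X$ is totally disconnected, then $K\backslash X$ (with $\mathrm{C}(K\backslash X)=\mathrm{C}(X)^K$ carrying its natural $\mathcal{G}$-action) is a $\mathcal{G}$-boundary.
   Context: A $G$-boundary is a compact $G$-space that is minimal (all orbits dense) and strongly proximal (for every Borel probability measure $\mu$ on $X$, the weak* closure of $G\mu$ contains a point mass). The quotient hypergroup $\mathcal{G}=K\backslash G/K$ has unit $K$, involution $\overline{KgK}=Kg^{-1}K$ and product $(KgK)*(KhK)=\frac{1}{[K:K\cap hKh^{-1}]}\sum_{l\in K/(K\cap hKh^{-1})}\delta_{KglhK}$ on (point masses of) elements. The $\mathcal{G}$-action on $\mathrm{C}(X)^K$ is $(KgK)f=\int_K k g f\,dk$ with $dk$ normalized Haar measure. A $\mathcal{G}$-action on a compact space $Y$ is a family of unital completely positive maps $\alpha_g$ on $\mathrm{C}(Y)$, $g \in \mathcal{G}$, with $\alpha_e=\mathrm{id}$ and $\alpha_g\alpha_h=\int\alpha_k\,d(\delta_g*\delta_h)(k)$; $\mathcal{G}$ then acts on the probability measures $\mathcal{P}(Y)$ by the dual maps. Such a $\mathcal{G}$-space $Y$ is minimal if $\overline{\mathrm{conv}}(\mathcal{G}\delta_y)=\mathcal{P}(Y)$ for every $y\in Y$, strongly proximal if for every $\mu\in\mathcal{P}(Y)$ the closure $\overline{\mathcal{G}\mu}$ contains a point mass, and a $\mathcal{G}$-boundary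 if it is minimal and strongly proximal. *)

From HB Require Import structures.
From mathcomp Require Import all_boot all_order all_algebra.
From mathcomp Require Import all_classical all_reals all_analysis.
Set Implicit Arguments. Unset Strict Implicit. Unset Printing Implicit Defensive.
Import Order.TTheory GRing.Theory Num.Theory.
Import numFieldNormedType.Exports.
Local Open Scope classical_set_scope.
Local Open Scope ring_scope.

Record topgroup (G : topologicalType) (mul : G -> G -> G) (inv : G -> G)
    (one : G) : Prop := TopGroup {
  tg_mulA : forall a b c, mul a (mul b c) = mul (mul a b) c;
  tg_mul1g : forall a, mul one a = a;
  tg_mulg1 : forall a, mul a one = a;
  tg_mulVg : forall a, mul (inv a) a = one;
  tg_mulgV : forall a, mul a (inv a) = one;
  tg_mul_cont : continuous (fun p : G * G => mul p.1 p.2);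
  tg_inv_cont : continuous inv;
  tg_hausdorff : hausdorff_space G }.

Definition tdlc_group (G : topologicalType) mul inv (one : G) : Prop :=
  [/\ topgroup mul inv one, locally_compact [set: G]
    & totally_disconnected [set: G]].

Definition compact_open_subgroup (G : topologicalType) (mul : G -> G -> G)
    (inv : G -> G) (one : G) (K : set G) : Prop :=
  [/\ K one, (forall a b, K a -> K b -> K (mul a b)),
      (forall a, K a -> K (inv a)), compact K & open K].

Definition continuous_action (G X : topologicalType) (mul : G -> G -> G)
    (one : G) (act : G -> X -> X) : Prop :=
  [/\ continuous (fun p : G * X => act p.1 p.2),
      (forall x, act one x = x) &
      (forall g h x, act (mul g h) x = act g (act h x))].

Definition compact_hausdorff (X : topologicalType) : Prop :=
  compact [set: X] /\ hausdorff_space X.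

Section States.
Variables (R : realType) (T : topologicalType).

(* a (Radon) probability measure on the compact space T, seen (Riesz) as a
   positive unital linear functional on C(T) = real continuous functions *)
Definition is_state (phi : (T -> R) -> R) : Prop :=
  [/\ (forall f g : T -> R, continuous f -> continuous g -> phi (f \+ g) = phi f + phi g),
      (forall (c : R) (f : T -> R), continuous f -> phi (fun x => c * f x) = c * phi f),
      (forall f : T -> R, continuous f -> (forall x, 0 <= f x) -> 0 <= phi f)
    & phi (fun _ => 1) = 1].

Definition dirac_state (x : T) : (T -> R) -> R := fun f => f x.

Definition wstar_closure (S : set ((T -> R) -> R)) : set ((T -> R) -> R) :=
  fun phi => forall (n : nat) (fs : 'I_n -> T -> R) (eps : R),
    (forall i, continuous (fs i)) -> 0 < eps ->
    exists2 psi, S psi & forall i, `|phi (fs i) - psi (fs i)| < eps.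

Definition state_conv (S : set ((T -> R) -> R)) : set ((T -> R) -> R) :=
  fun phi => exists (n : nat) (w : 'I_n -> R) (psi : 'I_n -> (T -> R) -> R),
    [/\ (forall i, 0 <= w i), \sum_(i < n) w i = 1, (forall i, S (psi i))
      & forall f, continuous f -> phi f = \sum_(i < n) w i * psi i f].

End States.

Definition G_orbit_state (R : realType) (G X : topologicalType)
    (act : G -> X -> X) (mu : (X -> R) -> R) : set ((X -> R) -> R) :=
  [set nu | exists g : G, nu = (fun f => mu (fun x => f (act g x)))].

Definition G_boundary (R : realType) (G X : topologicalType)
    (mul : G -> G -> G) (one : G) (act : G -> X -> X) : Prop :=
  [/\ compact_hausdorff X, continuous_action mul one act,
      (forall x : X, closure (range (fun g => act g x)) = [set: X])
    &
      (forall mu : (X -> R) -> R, is_state mu ->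
         exists x : X, wstar_closure (G_orbit_state act mu) (@dirac_state R X x))].

(* the normalized Haar measure dk of K, as a functional f |-> \int_K f dk
   (only the values of f on K matter) *)
Definition normalized_haar (R : realType) (G : topologicalType)
    (mul : G -> G -> G) (K : set G) (haar : (G -> R) -> R) : Prop :=
  (forall f g : G -> R, {in K, f =1 g} -> haar f = haar g) /\
  [/\ (forall f g : G -> R, {within K, continuous f} -> {within K, continuous g} ->
         haar (f \+ g) = haar f + haar g),
      (forall (c : R) (f : G -> R), {within K, continuous f} ->
         haar (fun k => c * f k) = c * haar f),
      (forall f : G -> R, {within K, continuous f} -> (forall k, K k -> 0 <= f k) ->
         0 <= haar f),
      haar (fun _ => 1) = 1
    & forall (f : G -> R) k0, K k0 -> {within K, continuous f} ->
         haar (fun k => f (mul k0 k)) = haar f].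

(* Y is the orbit space K\X, realised through the quotient map q.
   (KgK) F evaluated at y = Kx is \int_K F(q(g^-1 k^-1 x)) dk, i.e. the
   formula (KgK)f = \int_K k g f dk with (g f)(x) = f(g^-1 x), transported
   to C(Y) = C(X)^K. *)
Definition hyp_act (R : realType) (G X Y : topologicalType) (inv : G -> G)
    (act : G -> X -> X) (q : X -> Y) (haar : (G -> R) -> R) (g : G)
    (F : Y -> R) : Y -> R :=
  fun y => xget 0 [set r : R | exists x, q x = y /\
               r = haar (fun k => F (q (act (inv g) (act (inv k) x))))].

Definition hyp_orbit_state (R : realType) (G X Y : topologicalType)
    (inv : G -> G) (act : G -> X -> X) (q : X -> Y) (haar : (G -> R) -> R)
    (mu : (Y -> R) -> R) : set ((Y -> R) -> R) :=
  [set nu | exists g : G, nu = (fun F => mu (hyp_act inv act q haar g F))].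

Definition hyp_boundary (R : realType) (G X Y : topologicalType)
    (inv : G -> G) (act : G -> X -> X) (q : X -> Y) (haar : (G -> R) -> R)
    : Prop :=
  (forall (y : Y) (mu : (Y -> R) -> R), is_state mu ->
     wstar_closure (state_conv
        (hyp_orbit_state inv act q haar (@dirac_state R Y y))) mu) /\
  (forall mu : (Y -> R) -> R, is_state mu ->
     exists y : Y, wstar_closure (hyp_orbit_state inv act q haar mu)
                     (@dirac_state R Y y)).

(* Averaging over the compact group K maps C(X) onto the K-invariant functions,
   i.e. onto C(K\X), and the hypergroup element KgK acts on C(K\X) by
   translating by g and then averaging.  Strong proximality descends at once:
   lift a state on K\X to X, contract it to a point mass with G, and average
   back.  For minimality, strong proximality of X applied to the K-average of a
   point mass, combined with minimality of X, puts every point mass of K\X in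
   the weak-* closure of the hypergroup orbit of any other one.  As K\X is
   compact and totally disconnected, clopen partitions show that convex
   combinations of point masses are weak-* dense among all states, which gives
   the closed convex hull condition. *)

From HB Require Import structures.
From mathcomp Require Import all_boot all_order all_algebra.
From mathcomp Require Import all_classical all_reals all_analysis.
From mathcomp Require Import lra.
Import Order.TTheory GRing.Theory Num.Theory.
Import numFieldNormedType.Exports.
Local Open Scope classical_set_scope.
Local Open Scope ring_scope.

Section ContinuousFunctions.
Context {R : realType} {T : topologicalType}.
Implicit Types f g : T -> R.

Lemma continuous_add f g :
  continuous f -> continuous g -> continuous (fun x => f x + g x).
Proof. by move=> cf cg x; apply: (continuousD (cf x) (cg x)). Qed.

Lemma continuous_sub f g :
  continuous f -> continuous g -> continuous (fun x => f x - g x).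
Proof. by move=> cf cg x; apply: (continuousB (cf x) (cg x)). Qed.

Lemma continuous_mul f g :
  continuous f -> continuous g -> continuous (fun x => f x * g x).
Proof. by move=> cf cg x; apply: (continuousM (cf x) (cg x)). Qed.

Lemma continuous_scale (c : R) f : continuous f -> continuous (fun x => c * f x).
Proof. by move=> cf; apply: continuous_mul => //; exact: cst_continuous. Qed.

Lemma clopen_indic_continuous (S : set T) : clopen S -> continuous (\1_S : T -> R).
Proof.
move=> [oS cS] z; apply: cvg_near_cst.
have [Sz|nSz] := pselect (S z).
  apply: filterS (open_nbhs_nbhs (conj oS Sz)) => x Sx.
  by rewrite !indicE !mem_set.
apply: filterS (open_nbhs_nbhs (conj (closed_openC cS) nSz)) => x nSx.
by rewrite !indicE !memNset.
Qed.

End ContinuousFunctions.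

Section StateTheory.
Context {R : realType} {T : topologicalType} {mu : (T -> R) -> R}.
Hypothesis mu_state : is_state mu.
Implicit Types f g : T -> R.

Lemma stateD f g : continuous f -> continuous g ->
  mu (fun x => f x + g x) = mu f + mu g.
Proof. by case: mu_state => + _ _ _; apply. Qed.

Lemma stateZ (c : R) f : continuous f -> mu (fun x => c * f x) = c * mu f.
Proof. by case: mu_state => _ + _ _; apply. Qed.

Lemma state_ge0 f : continuous f -> (forall x, 0 <= f x) -> 0 <= mu f.
Proof. by case: mu_state => _ _ + _; apply. Qed.

Lemma state_cst (c : R) : mu (fun _ => c) = c.
Proof.
case: mu_state => _ _ _ mu1.
by rewrite -[RHS]mulr1 -mu1 -stateZ ?mulr1 //; exact: cst_continuous.
Qed.

Lemma stateB f g : continuous f -> continuous g ->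
  mu (fun x => f x - g x) = mu f - mu g.
Proof.
move=> cf cg; have -> : (fun x => f x - g x) = (fun x => f x + -1 * g x).
  by apply: funext => x; rewrite mulN1r.
by rewrite stateD ?stateZ ?mulN1r //; exact: continuous_scale.
Qed.

Lemma state_le f g : continuous f -> continuous g ->
  (forall x, f x <= g x) -> mu f <= mu g.
Proof.
move=> cf cg fg; rewrite -subr_ge0 -stateB //.
by apply: state_ge0 => [|x]; [exact: continuous_sub | rewrite subr_ge0].
Qed.

Lemma state_ler_norm f g : continuous f -> continuous g ->
  (forall x, `|f x| <= g x) -> `|mu f| <= mu g.
Proof.
move=> cf cg fg; rewrite ler_norml; apply/andP; split.
  rewrite -subr_ge0 opprK -stateD //; apply: state_ge0 => [|x].
    exact: continuous_add.
  by rewrite -lerBlDr sub0r; have := fg x; rewrite ler_norml => /andP[].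
by apply: state_le => // x; have := fg x; rewrite ler_norml => /andP[].
Qed.

End StateTheory.

Section WeakStarClosure.
Context {R : realType} {T : topologicalType}.
Implicit Types S : set ((T -> R) -> R).

Lemma wstar_closure_trans {S S'} :
  S `<=` wstar_closure S' -> wstar_closure S `<=` wstar_closure S'.
Proof.
move=> SS' phi phiS n fs eps cfs eps0.
have eps20 : 0 < eps / 2 by rewrite divr_gt0.
have [psi /SS' psiS' phipsi] := phiS n fs _ cfs eps20.
have [chi chiS' psichi] := psiS' n fs _ cfs eps20.
exists chi => // i; rewrite (splitr eps).
by apply: le_lt_trans (ler_distD (psi (fs i)) _ _) _; rewrite ltrD.
Qed.

Lemma state_convS {S S'} : S `<=` S' -> state_conv S `<=` state_conv S'.
Proof.
move=> SS' phi [n [w [psi [w0 w1 Spsi phiE]]]].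
by exists n, w, psi; split => // i; exact: SS'.
Qed.

Lemma state_conv_wstar_closure {S} :
  state_conv (wstar_closure S) `<=` wstar_closure (state_conv S).
Proof.
move=> phi [m [w [psi [w0 w1 psiS phiE]]]] n fs eps cfs eps0.
have eps20 : 0 < eps / 2 by rewrite divr_gt0.
have /choice [chi chiP] : forall j : 'I_m, exists chi,
    S chi /\ forall i, `|psi j (fs i) - chi (fs i)| < eps / 2.
  by move=> j; have [chi ? ?] := psiS j n fs _ cfs eps20; exists chi.
exists (fun f => \sum_(j < m) w j * chi j f).
  by exists m, w, chi; split => // j; case: (chiP j).
move=> i; rewrite phiE // -sumrB.
apply: le_lt_trans (ler_norm_sum _ _ _) _.
apply: (@le_lt_trans _ _ (\sum_(j < m) w j * (eps / 2))).
  apply: ler_sum => j _; rewrite -mulrBr normrM ger0_norm //.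
  by apply: ler_wpM2l => //; apply/ltW; case: (chiP j).
by rewrite -mulr_suml w1 mul1r [ltRHS]splitr ltrDl.
Qed.

End WeakStarClosure.

Section QuasiComponent.
Context {T : topologicalType}.

Definition quasi_component (x : T) : set T :=
  \bigcap_(C in [set C | clopen C /\ C x]) C.

Lemma quasi_component_refl x : quasi_component x x.
Proof. by move=> C []. Qed.

Lemma closed_quasi_component x : closed (quasi_component x).
Proof. by apply: closed_bigI => C [[]]. Qed.

Lemma compact_clopen_separation {x : T} {W : set T} : compact W ->
  quasi_component x `&` W = set0 ->
  exists C, [/\ clopen C, C x & C `&` W = set0].
Proof.
move=> cW QW0; apply: contrapT => noC.
pose F := filter_from [set C | clopen C /\ C x] (fun C => C `&` W).
have FF : Filter F.
  apply: filter_from_filter; first by exists setT; split => //; exact: clopenT.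
  move=> C1 C2 [clC1 C1x] [clC2 C2x]; exists (C1 `&` C2).
    by split; [exact: clopenI | split].
  by move=> z [[C1z C2z] Wz].
have PF : ProperFilter F.
  apply: filter_from_proper => C [clC Cx]; apply/set0P/negP => /eqP CW0.
  by apply: noC; exists C.
have FW : F W by exists setT; [split => //; exact: clopenT | move=> z []].
have [p [Wp clFp]] := cW F PF FW.
suff Qp : quasi_component x p by have : set0 p by rewrite -QW0.
move=> C [[oC cC] Cx]; apply: contrapT => nCp.
have FCW : F (C `&` W) by exists C.
have nbhsCp : nbhs p (~` C) by apply: open_nbhs_nbhs; split => //; exact: closed_openC.
by have [z [[Cz _] nCz]] := clFp _ _ FCW nbhsCp.
Qed.

Hypotheses (cT : compact [set: T]) (hT : hausdorff_space T).

Lemma quasi_component_sub {x : T} {A B : set T} : closed A -> closed B ->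
  A `&` B = set0 -> quasi_component x `<=` A `|` B -> A x ->
  quasi_component x `<=` A.
Proof.
(* Normality gives an open U around A whose closure misses B.  The compact set
   closure U \ U misses the quasi-component, hence also some clopen C around x,
   and then C `&` U = C `&` closure U is clopen, so it contains the
   quasi-component. *)
move=> cA cB AB0 QAB Ax.
have nbhsAB : set_nbhs A (~` B).
  apply/set_nbhsP; exists (~` B); split => //; first exact: closed_openC.
  by move=> z Az Bz; have : set0 z by rewrite -AB0.
have [P /set_nbhsP [U [oU AU UP]] clPB] := compact_normal hT cT cA nbhsAB.
have clUB : closure U `<=` ~` B by apply: subset_trans clPB; exact: closureS.
pose W := closure U `&` ~` U.
have cW : compact W.
  apply: (subclosed_compact _ cT) => //.
  exact: closedI (@closed_closure _ _) (open_closedC oU).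
have QW0 : quasi_component x `&` W = set0.
  apply/seteqP; split => // z [/QAB [/AU Uz|Bz] [clUz nUz]] //.
  exact: clUB clUz Bz.
have [C [[oC cC] Cx CW0]] := compact_clopen_separation cW QW0.
have CUE : C `&` U = C `&` closure U.
  apply/seteqP; split => z [Cz Uz]; split => //; first exact: subset_closure.
  by apply: contrapT => nUz; have : set0 z by rewrite -CW0.
have clCU : clopen (C `&` U).
  split; first exact: openI oC oU.
  by rewrite CUE; exact: closedI cC (@closed_closure _ _).
move=> z Qz; have [Cz Uz] := Qz _ (conj clCU (conj Cx (AU _ Ax))).
by case: (QAB _ Qz) => // Bz; exfalso; exact: clUB (subset_closure Uz) Bz.
Qed.

Lemma connected_quasi_component x : connected (quasi_component x).
Proof.
move=> B [z Bz] [U oU BQU] [D cD BQD].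
have cQ := closed_quasi_component x.
have cB : closed B by rewrite BQD; exact: closedI.
have cBc : closed (quasi_component x `&` ~` U).
  exact: closedI cQ (open_closedC oU).
have disj : B `&` (quasi_component x `&` ~` U) = set0.
  by apply/seteqP; split => // y; rewrite BQU => -[[_ Uy] [_ nUy]].
have cover : quasi_component x `<=` B `|` (quasi_component x `&` ~` U).
  move=> y Qy; have [Uy|nUy] := pselect (U y); [left | by right].
  by rewrite BQU.
have [Bx|nBx] := pselect (B x).
  apply/seteqP; split; first by rewrite BQU => y [].
  exact: quasi_component_sub cover Bx.
have Bcx : (quasi_component x `&` ~` U) x.
  by case: (cover x (quasi_component_refl x)).
have cover' : quasi_component x `<=` (quasi_component x `&` ~` U) `|` B.
  by move=> y /cover [By|By]; [right | left].
have disj' : (quasi_component x `&` ~` U) `&` B = set0 by rewrite setIC.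
have /(_ z) := quasi_component_sub cBc cB disj' cover' Bcx.
by move: Bz; rewrite {1}BQU => -[Qz Uz] /(_ Qz) [].
Qed.

Lemma totally_disconnected_quasi_component x :
  totally_disconnected [set: T] -> quasi_component x = [set x].
Proof.
move=> tdT; apply/seteqP; split => [|_ ->]; last exact: quasi_component_refl.
rewrite -(tdT x I); apply: connected_component_max => //.
  exact: quasi_component_refl.
exact: connected_quasi_component.
Qed.

Lemma totally_disconnected_clopen_nbhs x (U : set T) :
  totally_disconnected [set: T] -> nbhs x U ->
  exists D, [/\ clopen D, D x & D `<=` U].
Proof.
move=> tdT; rewrite nbhsE => -[V [oV Vx] VU].
have cW : compact (~` V).
  by apply: (subclosed_compact _ cT) => //; exact: open_closedC.
have QW0 : quasi_component x `&` ~` V = set0.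
  rewrite totally_disconnected_quasi_component //.
  by apply/seteqP; split => // z [->].
have [C [clC Cx CW0]] := compact_clopen_separation cW QW0.
exists C; split => // z Cz; apply: VU; apply: contrapT => nVz.
by have : set0 z by rewrite -CW0.
Qed.

End QuasiComponent.

Lemma compact_finite_subcover {T : topologicalType} (D : T -> set T) :
  compact [set: T] -> (forall z, nbhs z (D z)) ->
  exists zs : seq T, forall y, exists2 z, z \in zs & D z y.
Proof.
move=> cT nD; apply: contrapT => nocover.
pose F := filter_from [set: seq T] (fun zs => [set y | forall z, z \in zs -> ~ D z y]).
have FF : Filter F.
  apply: filter_from_filter; first by exists [::].
  move=> zs1 zs2 _ _; exists (zs1 ++ zs2) => // y nDy.
  by split => z zs_z; apply: nDy; rewrite mem_cat zs_z ?orbT.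
have PF : ProperFilter F.
  apply: filter_from_proper => zs _; apply: contrapT => empty; apply: nocover.
  exists zs => y; apply: contrapT => nDy; apply: empty; exists y => z zs_z Dzy.
  by apply: nDy; exists z.
have [p [_ clFp]] := cT F PF filterT.
have Fp : F [set y | forall z, z \in [:: p] -> ~ D z y] by exists [:: p].
have [y [nDy Dpy]] := clFp _ _ Fp (nD p).
by apply: (nDy p); rewrite ?mem_seq1.
Qed.

Section DiracApproximation.
Context {R : realType} {Y : topologicalType} {mu : (Y -> R) -> R}.
Hypothesis mu_state : is_state mu.

Lemma state_indic_approx (F : Y -> R) (S : set Y) (y0 : Y) (eps : R) :
  continuous F -> clopen S -> (forall y, S y -> `|F y - F y0| <= eps) ->
  `|mu (fun y => F y * \1_S y) - mu \1_S * F y0| <= eps * mu \1_S.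
Proof.
move=> cF clS oscS.
have cS : continuous (\1_S : Y -> R) := clopen_indic_continuous _ clS.
have -> : mu (fun y => F y * \1_S y) - mu \1_S * F y0 =
    mu (fun y => (F y - F y0) * \1_S y).
  under [in RHS]eq_fun do rewrite mulrBl.
  rewrite (stateB mu_state); [|exact: continuous_mul|exact: continuous_scale].
  by rewrite (stateZ mu_state) // [F y0 * _]mulrC.
rewrite -(stateZ mu_state) //; apply: (state_ler_norm mu_state).
- by apply: continuous_mul => //; apply: continuous_sub => //; exact: cst_continuous.
- exact: continuous_scale.
- move=> y; have [Sy|nSy] := pselect (S y).
    by rewrite indicE mem_set // !mulr1; exact: oscS.
  by rewrite indicE memNset // !mulr0 normr0.
Qed.

Context {n : nat} {Fs : 'I_n -> Y -> R} {eps : R} {D : Y -> set Y}.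
Hypotheses (cFs : forall i, continuous (Fs i)) (clD : forall z, clopen (D z)).
Hypothesis oscD : forall z y y', D z y -> D z y' -> forall i, `|Fs i y - Fs i y'| <= eps.

Lemma state_clopen_partition_approx {zs : seq Y} {S : set Y} : clopen S ->
  S `<=` [set y | exists2 z, z \in zs & D z y] ->
  exists l : seq (R * Y), [/\ forall p, p \in l -> 0 <= p.1,
    \sum_(p <- l) p.1 = mu \1_S &
    forall i, `|mu (fun y => Fs i y * \1_S y) - \sum_(p <- l) p.1 * Fs i p.2|
                <= eps * mu \1_S].
Proof.
(* Split off the clopen piece S `&` D z, weighted by its mass and represented
   by one of its points, and recurse on S `\` D z. *)
elim: zs S => [|z zs IH] S clS Scov.
  have S0 : \1_S = cst 0 :> (Y -> R).
    by apply: funext => y; rewrite indicE memNset // => /Scov [].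
  exists [::]; rewrite big_nil S0 (state_cst mu_state); split => // i.
  under eq_fun do rewrite mulr0.
  by rewrite big_nil (state_cst mu_state) subr0 normr0 mulr0.
pose T := S `&` D z; pose S' := S `&` ~` D z.
have clT : clopen T by exact: clopenI.
have clS' : clopen S' by apply: clopenI => //; exact: clopenC.
have [|l [l_ge0 l_sum l_approx]] := IH S' clS'.
  move=> y [Sy nDy]; have [w] := Scov y Sy.
  by rewrite in_cons => /orP[/eqP -> //|zs_w Dwy]; exists w.
have cT : continuous (\1_T : Y -> R) := clopen_indic_continuous _ clT.
have cS' : continuous (\1_S' : Y -> R) := clopen_indic_continuous _ clS'.
have indicS : \1_S = (fun y => \1_T y + \1_S' y) :> (Y -> R).
  apply: funext => y; rewrite !indicE !in_setI in_setC.
  by case: (y \in S); case: (y \in D z); rewrite /= ?addr0 ?add0r.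
pose y0 := xget z T.
exists ((mu \1_T, y0) :: l); split.
- move=> p; rewrite in_cons => /orP[/eqP -> /=|/l_ge0 //].
  by apply: (state_ge0 mu_state) => // y; rewrite indicE.
- by rewrite big_cons l_sum indicS (stateD mu_state).
move=> i; rewrite big_cons /= indicS (stateD mu_state) // mulrDr.
have -> : mu (fun y => Fs i y * (\1_T y + \1_S' y)) =
    mu (fun y => Fs i y * \1_T y) + mu (fun y => Fs i y * \1_S' y).
  rewrite -(stateD mu_state); try exact: continuous_mul.
  by under eq_fun do rewrite mulrDr.
rewrite opprD addrACA; apply: le_trans (ler_normD _ _) _.
apply: lerD; last exact: l_approx.
apply: state_indic_approx => // y Ty.
have Ty0 : T y0 by apply: xgetPex; exists y.
by apply: oscD (Ty.2) (Ty0.2) i.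
Qed.

End DiracApproximation.

Section DiracDensity.
Context {R : realType} {Y : topologicalType}.
Hypothesis cY : compact [set: Y].
Hypothesis clopen_base : forall (y : Y) (U : set Y), nbhs y U ->
  exists D, [/\ clopen D, D y & D `<=` U].

Lemma state_wstar_closure_dirac (mu : (Y -> R) -> R) : is_state mu ->
  wstar_closure (state_conv (range (@dirac_state R Y))) mu.
Proof.
move=> mu_state n Fs eps cFs eps0.
have eps40 : 0 < eps / 4 by rewrite divr_gt0.
have /choice [D DP] : forall z, exists D, [/\ clopen D, D z &
    D `<=` [set y | forall i, `|Fs i z - Fs i y| < eps / 4]].
  move=> z; apply: clopen_base; apply: filter_forall => i.
  by have /cvgrPdist_lt := cFs i z; apply.
have clD z : clopen (D z) by case: (DP z).
have oscD z y y' : D z y -> D z y' -> forall i, `|Fs i y - Fs i y'| <= eps / 2.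
  move=> Dy Dy' i; have [_ _ DU] := DP z.
  have := DU _ Dy i; have := DU _ Dy' i; rewrite /= => zy' zy.
  have := ler_distD (Fs i z) (Fs i y) (Fs i y').
  rewrite [`|Fs i y - Fs i z|]distrC; lra.
have nbhsD z : nbhs z (D z).
  by have [[oD _] Dz _] := DP z; exact: open_nbhs_nbhs.
have [zs cover] := compact_finite_subcover D cY nbhsD.
have [l [l_ge0 l_sum l_approx]] :=
  state_clopen_partition_approx mu_state cFs clD oscD clopenT (fun y _ => cover y).
rewrite indicT (state_cst mu_state) in l_sum l_approx.
pose p j := tnth (in_tuple l) j.
exists (fun f => \sum_(j < size l) (p j).1 * f (p j).2).
  exists (size l), (fun j => (p j).1), (fun j => dirac_state (p j).2); split => //.
  - by move=> j; apply: l_ge0; exact: mem_tnth.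
  - by rewrite -l_sum [RHS]big_tnth.
move=> i; have := l_approx i; rewrite mulr1 big_tnth -/p.
under eq_fun do rewrite /= mulr1.
by move/le_lt_trans; apply; lra.
Qed.

End DiracDensity.

Lemma continuous_quotient_map {X Y Z : topologicalType} {q : X -> Y} {H : Y -> Z} :
  compact [set: X] -> hausdorff_space Y -> continuous q ->
  (forall y, exists x, q x = y) -> continuous (fun x => H (q x)) -> continuous H.
Proof.
move=> cX hY cq q_surj cHq; apply/continuous_closedP => C cC.
have -> : H @^-1` C = q @` ((fun x => H (q x)) @^-1` C).
  apply/seteqP; split => [y Cy|_ [x Cx <-] //].
  by have [x qx] := q_surj y; exists x => //=; rewrite qx.
apply: (compact_closed hY); apply: continuous_compact.
  exact: continuous_subspaceT.
apply: (subclosed_compact _ cX) => //.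
by apply: preimage_closed => // x _; exact: cHq.
Qed.

Section KAverage.
Context {R : realType} {G : topologicalType} {mul : G -> G -> G} {inv : G -> G}
  {one : G} {K : set G} {haar : (G -> R) -> R} {X : topologicalType}
  {act : G -> X -> X}.
Hypotheses (G_group : topgroup mul inv one)
  (K_subgroup : compact_open_subgroup mul inv one K)
  (haar_K : normalized_haar mul K haar) (act_G : continuous_action mul one act).

Lemma invgK g : inv (inv g) = g.
Proof.
case: G_group => mulA mul1g mulg1 mulVg _ _ _ _.
by rewrite -[inv (inv g)]mulg1 -(mulVg g) mulA mulVg mul1g.
Qed.

Lemma invgM a b : inv (mul a b) = mul (inv b) (inv a).
Proof.
case: G_group => mulA mul1g mulg1 mulVg mulgV _ _ _.
have mulI c x y : mul c x = mul c y -> x = y.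
  by move=> e; rewrite -(mul1g x) -(mulVg c) -mulA e mulA mulVg mul1g.
apply: (mulI (mul a b)); rewrite mulgV.
by rewrite -mulA (mulA b) mulgV mul1g mulgV.
Qed.

Lemma actM g h x : act (mul g h) x = act g (act h x).
Proof. by case: act_G. Qed.

Lemma act_continuous g : continuous (act g).
Proof.
move=> x; have [act_cont _ _] := act_G.
apply: (@continuous2_cvg _ G X X (nbhs x) _ (fun _ => g) id act g x).
- exact: (act_cont (g, x)).
- exact: cvg_cst.
- exact: cvg_id.
Qed.

Lemma continuous_act_inv (f : X -> R) : continuous f ->
  continuous (fun p : G * X => f (act (inv p.1) p.2)).
Proof.
move=> cf p; apply: (continuous_comp _ (cf _)).
have [act_cont _ _] := act_G; have [_ _ _ _ _ _ inv_cont _] := G_group.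
apply: (@continuous2_cvg _ G X X (nbhs p) _ (fun p => inv p.1) snd act (inv p.1) p.2).
- exact: (act_cont (inv p.1, p.2)).
- by apply: (cvg_comp _ _ cvg_fst); exact: inv_cont.
- exact: cvg_snd.
Qed.

Lemma continuous_act_inv_at (f : X -> R) x : continuous f ->
  continuous (fun k => f (act (inv k) x)).
Proof.
move=> cf k; have := continuous_act_inv f cf (k, x).
by move/(cvg_comp _ _ (cvg_pair (@cvg_id _ (nbhs k)) (cvg_cst x))).
Qed.

Lemma haar_state : is_state haar.
Proof.
have [_ [haarD haarZ haar_ge0 haar1 _]] := haar_K.
split=> [f g cf cg|c f cf|f cf f_ge0|//].
- by apply: haarD; exact: continuous_subspaceT.
- by apply: haarZ; exact: continuous_subspaceT.
- by apply: haar_ge0 => [|k _]; [exact: continuous_subspaceT | exact: f_ge0].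
Qed.

Lemma haar_le_on (f g : G -> R) : continuous f -> continuous g ->
  (forall k, K k -> f k <= g k) -> haar f <= haar g.
Proof.
have [_ [_ _ haar_ge0 _ _]] := haar_K.
move=> cf cg fg; rewrite -subr_ge0 -(stateB haar_state) //.
apply: haar_ge0 => [|k Kk]; last by rewrite subr_ge0; exact: fg.
exact/continuous_subspaceT/continuous_sub.
Qed.

Lemma haar_ler_norm_on (f : G -> R) (c : R) : continuous f ->
  (forall k, K k -> `|f k| <= c) -> `|haar f| <= c.
Proof.
move=> cf fc; rewrite ler_norml; apply/andP; split.
  rewrite -[- c](state_cst haar_state); apply: haar_le_on => //.
    exact: cst_continuous.
  by move=> k /fc; rewrite ler_norml => /andP[].
rewrite -[c in _ <= c](state_cst haar_state); apply: haar_le_on => //.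
  exact: cst_continuous.
by move=> k /fc; rewrite ler_norml => /andP[].
Qed.

Lemma haar_mull (f : G -> R) k0 : K k0 -> continuous f ->
  haar (fun k => f (mul k0 k)) = haar f.
Proof.
have [_ [_ _ _ _ haar_inv]] := haar_K.
by move=> Kk0 cf; apply: haar_inv => //; exact: continuous_subspaceT.
Qed.

Definition Kaverage (f : X -> R) (x : X) : R := haar (fun k => f (act (inv k) x)).

Lemma Kaverage_state x : is_state (fun f => Kaverage f x).
Proof.
have [haarD haarZ haar_ge0 haar1] := haar_state.
split=> [f g cf cg|c f cf|f cf f_ge0|//].
- by apply: haarD; exact: continuous_act_inv_at.
- by apply: haarZ; exact: continuous_act_inv_at.
- by apply: haar_ge0 => [|k]; [exact: continuous_act_inv_at | exact: f_ge0].
Qed.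

Lemma Kaverage_act (f : X -> R) k0 x : continuous f -> K k0 ->
  Kaverage f (act k0 x) = Kaverage f x.
Proof.
move=> cf Kk0; have [_ _ Kinv _ _] := K_subgroup.
rewrite /Kaverage -(haar_mull _ _ (Kinv _ Kk0) (continuous_act_inv_at f x cf)).
by congr haar; apply: funext => k; rewrite invgM invgK actM.
Qed.

Lemma near_act_inv_uniform (f : X -> R) x0 (e : R) : continuous f -> 0 < e ->
  \forall x \near x0,
    K `<=` [set k | `|f (act (inv k) x0) - f (act (inv k) x)| < e].
Proof.
move=> cf e0; have e20 : 0 < e / 2 by rewrite divr_gt0.
have [_ _ _ cK _] := K_subgroup.
have near_cover := (compact_near_coveringP K).1 cK.
apply: near_cover => k Kk.
have /cvgrPdist_lt /(_ _ e20) := continuous_act_inv f cf (k, x0).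
case=> [[A B]] /= [nA nB] AB; exists (A, B) => // -[k' x] /= [Ak' Bx].
have := AB (k', x0) (conj Ak' (nbhs_singleton nB)).
have := AB (k', x) (conj Ak' Bx); rewrite /= => kx kx0.
have := ler_distD (f (act (inv k) x0)) (f (act (inv k') x0)) (f (act (inv k') x)).
rewrite [`|f (act (inv k') x0) - f (act (inv k) x0)|]distrC; lra.
Qed.

Lemma Kaverage_continuous (f : X -> R) : continuous f -> continuous (Kaverage f).
Proof.
move=> cf x0; apply/cvgrPdist_le => e e0.
apply: filterS (near_act_inv_uniform f x0 e cf e0) => x near_x.
rewrite /Kaverage -(stateB haar_state); try exact: continuous_act_inv_at.
apply: haar_ler_norm_on => [|k Kk]; last exact/ltW/near_x.
by apply: continuous_sub; exact: continuous_act_inv_at.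
Qed.

End KAverage.


Section HypergroupBoundary.
Context {R : realType} {G : topologicalType} {mul : G -> G -> G} {inv : G -> G}
  {one : G} {K : set G} {haar : (G -> R) -> R} {X : topologicalType}
  {act : G -> X -> X} {Y : topologicalType} {q : X -> Y}.
Hypotheses (G_group : topgroup mul inv one)
  (K_subgroup : compact_open_subgroup mul inv one K)
  (haar_K : normalized_haar mul K haar) (act_G : continuous_action mul one act).
Hypotheses (cX : compact [set: X]) (hY : hausdorff_space Y) (cq : continuous q)
  (q_surj : forall y, exists x, q x = y)
  (q_fibre : forall x x', q x = q x' <-> exists2 k, K k & x' = act k x).

Local Notation Kaverage := (@Kaverage R G inv haar X act).

Definition Kdescend (f : X -> R) (y : Y) : R :=
  xget 0 [set r | exists x, q x = y /\ r = Kaverage f x].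

Lemma hyp_actE g (F : Y -> R) :
  hyp_act inv act q haar g F = Kdescend (fun x => F (q (act (inv g) x))).
Proof. by []. Qed.

Lemma Kdescend_q (f : X -> R) x : continuous f -> Kdescend f (q x) = Kaverage f x.
Proof.
move=> cf; apply: xget_unique; first by exists x.
move=> _ [x' [/q_fibre [k Kk ->] ->]].
by rewrite (Kaverage_act G_group K_subgroup haar_K act_G).
Qed.

Lemma Kdescend_continuous (f : X -> R) : continuous f -> continuous (Kdescend f).
Proof.
move=> cf; apply: (continuous_quotient_map cX hY cq q_surj).
have -> : (fun x => Kdescend f (q x)) = Kaverage f.
  by apply: funext => x; exact: Kdescend_q.
exact: (Kaverage_continuous G_group K_subgroup haar_K act_G).
Qed.

Lemma Kdescend_state y : is_state (fun f => Kdescend f y).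
Proof.
have [x <-] := q_surj y.
have [avgD avgZ avg_ge0 avg1] := Kaverage_state G_group haar_K act_G x.
split=> [f g cf cg|c f cf|f cf f_ge0|] /=.
- by rewrite !Kdescend_q ?avgD //; exact: continuous_add.
- by rewrite !Kdescend_q ?avgZ //; exact: continuous_scale.
- by rewrite Kdescend_q ?avg_ge0.
- by rewrite Kdescend_q ?avg1 //; exact: cst_continuous.
Qed.

Lemma state_comp_Kdescend (mu : (Y -> R) -> R) : is_state mu ->
  is_state (fun f => mu (Kdescend f)).
Proof.
move=> mu_state; split=> [f g cf cg|c f cf|f cf f_ge0|] /=.
- rewrite -(stateD mu_state); try exact: Kdescend_continuous.
  by congr mu; apply: funext => y; rewrite (stateD (Kdescend_state y)).
- rewrite -(stateZ mu_state); last exact: Kdescend_continuous.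
  by congr mu; apply: funext => y; rewrite (stateZ (Kdescend_state y)).
- apply: (state_ge0 mu_state) => [|y]; first exact: Kdescend_continuous.
  exact: (state_ge0 (Kdescend_state y)).
- rewrite -[RHS](state_cst mu_state); congr mu; apply: funext => y.
  exact: (state_cst (Kdescend_state y)).
Qed.

Hypothesis X_minimal : forall x, closure (range (fun g => act g x)) = [set: X].
Hypothesis X_strongly_proximal : forall mu : (X -> R) -> R, is_state mu ->
  exists x, wstar_closure (G_orbit_state act mu) (@dirac_state R X x).

Let continuous_comp_q {F : Y -> R} : continuous F -> continuous (fun x => F (q x)).
Proof. by move=> cF x; apply: continuous_comp; [exact: cq | exact: cF]. Qed.

Lemma hyp_strongly_proximal (mu : (Y -> R) -> R) : is_state mu ->
  exists y, wstar_closure (hyp_orbit_state inv act q haar mu) (@dirac_state R Y y).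
Proof.
move=> mu_state.
have [x x_cl] := X_strongly_proximal _ (state_comp_Kdescend _ mu_state).
exists (q x) => n Fs eps cFs eps0.
have [_ [g ->] approx] :=
  x_cl n (fun i x => Fs i (q x)) eps (fun i => continuous_comp_q (cFs i)) eps0.
exists (fun F => mu (hyp_act inv act q haar (inv g) F)); first by exists (inv g).
by move=> i; rewrite hyp_actE (invgK G_group); exact: approx.
Qed.

Lemma dirac_hyp_orbit_closure y y' :
  wstar_closure (hyp_orbit_state inv act q haar (@dirac_state R Y y))
    (@dirac_state R Y y').
Proof.
(* Strong proximality puts a point mass at some x0 in the G-orbit closure of
   the K-average at x, and minimality moves x0 close to x'. *)
move=> n Fs eps cFs eps0; have eps20 : 0 < eps / 2 by rewrite divr_gt0.
have [x <-] := q_surj y; have [x' <-] := q_surj y'.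
have cFs_act g i : continuous (fun z => Fs i (q (act g z))).
  move=> z; exact: continuous_comp (act_continuous act_G g z)
    (continuous_comp_q (cFs i) _).
have [x0 x0_cl] := X_strongly_proximal _ (Kaverage_state G_group haar_K act_G x).
have near_x' : \forall z \near x', forall i, `|Fs i (q x') - Fs i (q z)| < eps / 2.
  apply: filter_forall => i.
  by have /cvgrPdist_lt := continuous_comp_q (cFs i) x'; apply.
have : closure (range (fun h => act h x0)) x' by rewrite X_minimal.
move=> /(_ _ near_x') [_ [[h _ <-] hx0_near]].
have [_ [g ->] approx] := x0_cl n _ (eps / 2) (cFs_act h) eps20.
exists (fun F => hyp_act inv act q haar (inv (mul h g)) F (q x)).
  by exists (inv (mul h g)).
move=> i; rewrite /dirac_state hyp_actE (invgK G_group) Kdescend_q; last exact: cFs_act.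
have -> : (fun z => Fs i (q (act (mul h g) z))) =
    (fun z => Fs i (q (act h (act g z)))).
  by apply: funext => z; rewrite (actM act_G).
have := approx i; have := hx0_near i; rewrite /dirac_state /= => near_h near_g.
have := ler_distD (Fs i (q (act h x0))) (Fs i (q x'))
  (Kaverage (fun z => Fs i (q (act h (act g z)))) x); lra.
Qed.

Lemma hyp_minimal (y : Y) (mu : (Y -> R) -> R) :
  compact [set: Y] -> totally_disconnected [set: Y] -> is_state mu ->
  wstar_closure (state_conv (hyp_orbit_state inv act q haar (@dirac_state R Y y))) mu.
Proof.
move=> cY tdY mu_state.
have clopen_base (z : Y) U : nbhs z U -> exists D, [/\ clopen D, D z & D `<=` U].
  exact: totally_disconnected_clopen_nbhs cY hY z U tdY.
move: (state_wstar_closure_dirac cY clopen_base _ mu_state).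
apply: wstar_closure_trans => phi phi_conv; apply: state_conv_wstar_closure.
by apply: state_convS phi_conv => _ [y' _ <-]; exact: dirac_hyp_orbit_closure.
Qed.

End HypergroupBoundary.

Theorem proposition4p7 (R : realType) (G : topologicalType)
    (mul : G -> G -> G) (inv : G -> G) (one : G) (K : set G)
    (haar : (G -> R) -> R)
    (X : topologicalType) (act : G -> X -> X)
    (Y : topologicalType) (q : X -> Y) :
  tdlc_group mul inv one ->
  compact_open_subgroup mul inv one K ->
  normalized_haar mul K haar ->
  G_boundary R mul one act ->
  (* Y together with q is the orbit space K\X *)
  compact_hausdorff Y -> continuous q -> (forall y : Y, exists x : X, q x = y) ->
  (forall x x', q x = q x' <-> exists2 k, K k & x' = act k x) ->
  totally_disconnected [set: Y] ->
  hyp_boundary inv act q haar.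
Proof.
move=> [G_group _ _] K_subgroup haar_K [[cX _] act_G X_minimal X_sp] [cY hY]
  cq q_surj q_fibre tdY.
split=> [y mu|mu].
- exact: hyp_minimal G_group K_subgroup haar_K act_G hY cq q_surj q_fibre
    X_minimal X_sp y mu cY tdY.
- exact: hyp_strongly_proximal G_group K_subgroup haar_K act_G cX hY cq q_surj
    q_fibre X_sp mu.
Qed.
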